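(* Let $R$ be a commutative ring, $M$ an $R$-module, $y_1,\ldots,y_r\in R$, $i>0$ an integer, and $I\subseteq R$ an ideal with $I\supseteq(y_1,\ldots,y_r)$. Assume that $I\,H_i(y_A;M)=0$ for all $A\subseteq\{1,\ldots,r\}$. Then $I\,H_{i+1}(y_A;M)=0$ for all $A\subseteq\{1,\ldots,r\}$.
   Context: For $A\subseteq\{1,\ldots,r\}$, $y_A=\{y_j:j\in A\}$ and $H_i(y_A;M)$ denotes the $i$-th Koszul homology of $M$ with respect to the elements $y_A$. *)

From HB Require Import structures.
From mathcomp Require Import all_boot all_order all_algebra.
Set Implicit Arguments. Unset Strict Implicit. Unset Printing Implicit Defensive.
Import GRing.Theory.
Local Open Scope ring_scope.

Definition is_ideal (R : comPzRingType) (I : {pred R}) : Prop :=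
  0 \in I /\ (forall a u v, u \in I -> v \in I -> a * u + v \in I).

(* Koszul complex K(y_A; M): a chain of degree i is a function
   c : {set 'I_r} -> M (c S = coefficient of e_S), supported on subsets
   S of A with #|S| = i. *)
Definition kchain (R : comPzRingType) (M : lmodType R) (r : nat)
  (A : {set 'I_r}) (i : nat) (c : {set 'I_r} -> M) : Prop :=
  forall S, c S != 0 -> S \subset A /\ #|S| = i.

(* Koszul differential: d(e_S m) = sum_{j in S} (-1)^{#{k in S | k < j}} y_j e_{S\j} m,
   i.e. (d c) T = sum_{j notin T} (-1)^{#{k in T | k < j}} y_j c (j |: T). *)
Definition kdiff (R : comPzRingType) (M : lmodType R) (r : nat)
  (y : 'I_r -> R) (c : {set 'I_r} -> M) : {set 'I_r} -> M :=
  fun T => \sum_(j in ~: T)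
     ((-1) ^+ #|[set k in T | (k < j)%N]| * y j) *: c (j |: T).

Definition kcycle (R : comPzRingType) (M : lmodType R) (r : nat)
  (y : 'I_r -> R) (A : {set 'I_r}) (i : nat) (z : {set 'I_r} -> M) : Prop :=
  @kchain R M r A i z /\ kdiff y z = (fun _ => 0).

Definition kboundary (R : comPzRingType) (M : lmodType R) (r : nat)
  (y : 'I_r -> R) (A : {set 'I_r}) (i : nat) (z : {set 'I_r} -> M) : Prop :=
  exists b, @kchain R M r A i.+1 b /\ kdiff y b = z.

Definition ann_koszul_homology (R : comPzRingType) (M : lmodType R) (r : nat)
  (y : 'I_r -> R) (I : {pred R}) (A : {set 'I_r}) (i : nat) : Prop :=
  forall a (z : {set 'I_r} -> M), a \in I -> kcycle y A i z ->
    kboundary y A i (fun S => a *: z S).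

From mathcomp Require Import all_boot all_order all_algebra.
From Stdlib Require Import FunctionalExtensionality.
Set Implicit Arguments. Unset Strict Implicit. Unset Printing Implicit Defensive.
Import GRing.Theory.
Local Open Scope ring_scope.

(* Write ι_k for the contraction by e_k^* and e_k ∧ - for exterior
   multiplication by e_k.  Then d = Σ_j y_j ι_j, ι_k anticommutes with d, and
   d (e_k ∧ Y) + e_k ∧ d Y = y_k Y.
   Given an (i+1)-cycle z of K(y_A; M) and a ∈ I, keep a z homologous to a
   cycle w supported in D ⊆ A and remove the indices of D one at a time.  For
   k ∈ D, ι_k w is an i-cycle on D∖k, and it is a boundary over A∖k because
   ι_k w = a ι_k z + d ι_k V when a z = w + d V.  A boundary of a chain U on E is also a boundary of a chain on E∖l
   for l outside the support of the cycle: y_l ι_l U is a boundary over E∖l,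
   and U - e_l ∧ ι_l U plus a primitive of it works.  Hence ι_k w = d X with X
   on D∖k, and w + d (e_k ∧ X) is a cycle on D∖k homologous to w.  When D is
   empty the cycle is 0, so a z is a boundary. *)

Lemma sum_antisym_eq0 (V : zmodType) n (F : 'I_n -> 'I_n -> V) :
  (forall j l, F j l = - F l j) -> (forall j, F j j = 0) ->
  \sum_j \sum_l F j l = 0.
Proof.
move=> Fanti Fdiag.
pose G (j l : 'I_n) := if (j < l)%N then F j l else 0.
have FG j l : F j l = G j l - G l j.
  rewrite /G; case: (ltngtP j l) => [_|_|/val_inj ->].
  - by rewrite subr0.
  - by rewrite sub0r -Fanti.
  - by rewrite Fdiag subrr.
under eq_bigr => j _ do under eq_bigr => l _ do rewrite FG.
under eq_bigr => j _ do rewrite sumrB.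
by rewrite sumrB [X in _ - X]exchange_big subrr.
Qed.

Section KoszulCalculus.

Variables (R : comPzRingType) (M : lmodType R) (r : nat) (y : 'I_r -> R).
Implicit Types (c Y : {set 'I_r} -> M) (S T D E : {set 'I_r}) (j k l : 'I_r)
  (p : nat).

Definition ksign T k : R := (-1) ^+ #|[set m in T | (m < k)%N]|.

(* Chains are indexed by subsets as in [kdiff]: [contr k] is the contraction
   by the dual basis vector e_k^* and [wedge k] is e_k ∧ -. *)
Definition contr k c : {set 'I_r} -> M :=
  fun T => if k \in T then 0 else ksign T k *: c (k |: T).

Definition wedge k c : {set 'I_r} -> M :=
  fun S => if k \in S then ksign (S :\ k) k *: c (S :\ k) else 0.

Lemma ksign_scaleK T k (v : M) : ksign T k *: (ksign T k *: v) = v.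
Proof. by rewrite scalerA -expr2 sqrr_sign scale1r. Qed.

Lemma ksignU1 T j k : j \notin T -> j != k ->
  ksign (j |: T) k = ksign T k * (-1) ^+ (j < k)%N.
Proof.
move=> jT jk; rewrite /ksign -exprD; congr (_ ^+ _).
case: (ltnP j k) => jk'.
- have -> : [set m in j |: T | (m < k)%N] = j |: [set m in T | (m < k)%N].
    by apply/setP => m; rewrite !inE; case: eqP => // ->; rewrite jk'.
  by rewrite cardsU1 inE (negbTE jT) addnC.
- rewrite addn0; apply: eq_card => m; rewrite !inE.
  by case: eqP => [->|] //=; rewrite ltnNge jk' ?andbF.
Qed.

Lemma sign_ltn_swap j k : j != k ->
  ((-1) ^+ (j < k)%N : R) = - (-1) ^+ (k < j)%N.
Proof.
move=> jk; rewrite -signrN; congr (_ ^+ _).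
by case: (ltngtP j k) => // /val_inj jk'; rewrite jk' eqxx in jk.
Qed.

Lemma eq_contr k c1 c2 T : c1 =1 c2 -> contr k c1 T = contr k c2 T.
Proof. by move=> e; rewrite /contr e. Qed.

Lemma eq_wedge k c1 c2 T : c1 =1 c2 -> wedge k c1 T = wedge k c2 T.
Proof. by move=> e; rewrite /wedge e. Qed.

Lemma eq_kdiff c1 c2 T : c1 =1 c2 -> kdiff y c1 T = kdiff y c2 T.
Proof. by move=> e; apply: eq_bigr => j _; rewrite e. Qed.

Lemma contr0 k T : contr k (fun=> 0 : M) T = 0.
Proof. by rewrite /contr scaler0 if_same. Qed.

Lemma contrD k c1 c2 T :
  contr k (fun S => c1 S + c2 S) T = contr k c1 T + contr k c2 T.
Proof. by rewrite /contr; case: (k \in T); rewrite ?addr0 // scalerDr. Qed.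

Lemma contrN k c T : contr k (fun S => - c S) T = - contr k c T.
Proof. by rewrite /contr; case: (k \in T); rewrite ?oppr0 // scalerN. Qed.

Lemma contrZ k a c T : contr k (fun S => a *: c S) T = a *: contr k c T.
Proof. by rewrite /contr; case: (k \in T); rewrite ?scaler0 // !scalerA mulrC. Qed.

Lemma contr_sum k (F : 'I_r -> {set 'I_r} -> M) T :
  contr k (fun S => \sum_j F j S) T = \sum_j contr k (F j) T.
Proof. by rewrite /contr; case: (k \in T); [rewrite big1 | rewrite scaler_sumr]. Qed.

Lemma wedge0 k T : wedge k (fun=> 0 : M) T = 0.
Proof. by rewrite /wedge scaler0 if_same. Qed.

Lemma wedgeZ k a c T : wedge k (fun S => a *: c S) T = a *: wedge k c T.
Proof. by rewrite /wedge; case: (k \in T); rewrite ?scaler0 // !scalerA mulrC. Qed.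

Lemma wedge_sum k (F : 'I_r -> {set 'I_r} -> M) T :
  wedge k (fun S => \sum_j F j S) T = \sum_j wedge k (F j) T.
Proof. by rewrite /wedge; case: (k \in T); [rewrite scaler_sumr | rewrite big1]. Qed.

Lemma kdiff0 T : kdiff y (fun=> 0 : M) T = 0.
Proof. by rewrite /kdiff big1 // => j _; rewrite scaler0. Qed.

Lemma kdiffD c1 c2 T :
  kdiff y (fun S => c1 S + c2 S) T = kdiff y c1 T + kdiff y c2 T.
Proof. by rewrite /kdiff -big_split; apply: eq_bigr => j _; rewrite scalerDr. Qed.

Lemma kdiffN c T : kdiff y (fun S => - c S) T = - kdiff y c T.
Proof. by rewrite /kdiff -sumrN; apply: eq_bigr => j _; rewrite scalerN. Qed.

Lemma kdiffZ a c T : kdiff y (fun S => a *: c S) T = a *: kdiff y c T.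
Proof.
by rewrite /kdiff scaler_sumr; apply: eq_bigr => j _; rewrite !scalerA mulrC.
Qed.

Lemma kdiffE c T : kdiff y c T = \sum_j y j *: contr j c T.
Proof.
rewrite /kdiff [RHS](bigID (fun j => j \in T)) /= [X in _ = X + _]big1 ?add0r.
  apply: eq_big => [j|j]; rewrite inE // => /negbTE jT.
  by rewrite /contr jT scalerA mulrC.
by move=> j jT; rewrite /contr jT scaler0.
Qed.

Lemma contr_anticomm j k c T : contr k (contr j c) T = - contr j (contr k c) T.
Proof.
rewrite /contr; have [->|jk] := eqVneq j k.
  by case: (k \in T); rewrite ?oppr0 // setU11 scaler0 oppr0.
case kT: (k \in T); case jT: (j \in T);
  rewrite ?oppr0 ?in_setU1 ?kT ?jT ?orbT ?scaler0 ?oppr0 //.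
rewrite (negbTE jk) eq_sym (negbTE jk) /= !scalerA setUCA -scaleNr.
rewrite (@ksignU1 T k j) ?kT 1?eq_sym // (@ksignU1 T j k) ?jT //.
by rewrite (sign_ltn_swap jk) !mulrN opprK mulrCA.
Qed.

Lemma contr_contr_eq0 k c T : contr k (contr k c) T = 0.
Proof. by rewrite /contr setU11 scaler0 if_same. Qed.

Lemma kdiff_contr k c T : kdiff y (contr k c) T = - contr k (kdiff y c) T.
Proof.
rewrite (@eq_contr _ _ (fun S => \sum_j y j *: contr j c S)); last exact: kdiffE.
rewrite kdiffE contr_sum -sumrN; apply: eq_bigr => j _.
by rewrite contrZ contr_anticomm scalerN.
Qed.

Lemma kdiffK c T : kdiff y (kdiff y c) T = 0.
Proof.
rewrite kdiffE.
under eq_bigr => j _ do rewrite -[contr j _ T]opprK -kdiff_contr kdiffE.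
under eq_bigr => j _ do rewrite scalerN scaler_sumr.
rewrite sumrN sum_antisym_eq0 ?oppr0 // => [j l|j].
  by rewrite !scalerA contr_anticomm scalerN mulrC.
by rewrite contr_contr_eq0 !scaler0.
Qed.

Lemma kcycle_contr k c : (forall T, kdiff y c T = 0) ->
  forall T, kdiff y (contr k c) T = 0.
Proof. by move=> dc T; rewrite kdiff_contr (eq_contr _ _ dc) contr0 oppr0. Qed.

Lemma contr_wedge j l Y T :
  contr j (wedge l Y) T + wedge l (contr j Y) T = if j == l then Y T else 0.
Proof.
rewrite /contr /wedge; have [->|jl] := eqVneq j l.
  case lT: (l \in T).
    by rewrite add0r setD11 ksign_scaleK setD1K.
  by rewrite addr0 setU11 setU1K ?lT // ksign_scaleK.
case lT: (l \in T); last first.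
  by case: (j \in T);
    rewrite ?in_setU1 ?(eq_sym l j) ?(negbTE jl) ?lT /= ?addr0 ?scaler0.
case jT: (j \in T); first by rewrite in_setD1 jl jT add0r scaler0.
have jTl : (j |: T) :\ l = j |: (T :\ l).
  by apply/setP => m; rewrite !inE; case: (eqVneq m j) => [->|] //=; rewrite jl.
rewrite in_setU1 lT orbT in_setD1 jT andbF !scalerA jTl -scalerDl.
have lTl : l \notin T :\ l by rewrite setD11.
have jT' : j \notin T :\ l by rewrite in_setD1 jT andbF.
rewrite -[in ksign T j](setD1K lT) (@ksignU1 (T :\ l) l j) 1?eq_sym //.
rewrite (@ksignU1 (T :\ l) j l) // (sign_ltn_swap jl) !mulrN mulrACA.
by rewrite -expr2 sqrr_sign mulr1 [ksign _ l * _]mulrC addNr scale0r.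
Qed.

Lemma kdiff_wedge l Y T :
  kdiff y (wedge l Y) T + wedge l (kdiff y Y) T = y l *: Y T.
Proof.
rewrite (@eq_wedge _ _ (fun S => \sum_j y j *: contr j Y S)); last exact: kdiffE.
rewrite kdiffE wedge_sum -big_split (bigD1 l) //= big1 ?addr0 => [|j jl].
  by rewrite wedgeZ -scalerDr contr_wedge eqxx.
by rewrite wedgeZ -scalerDr contr_wedge (negbTE jl) scaler0.
Qed.

Lemma contr_wedge_id l Y : (forall S, l \in S -> Y S = 0) ->
  forall T, contr l (wedge l Y) T = Y T.
Proof.
move=> Y0 T; have := contr_wedge l l Y T; rewrite eqxx => <-.
rewrite [wedge l _ T]/wedge; case lT: (l \in T); last by rewrite addr0.
by rewrite /contr setD11 setD1K // Y0 // !scaler0 addr0.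
Qed.

Lemma kchainS D E p c : D \subset E -> kchain D p c -> kchain E p c.
Proof. by move=> DE cD S /cD [SD ->]; split; first exact: subset_trans SD DE. Qed.

Lemma kchain0 D p : kchain D p (fun=> 0 : M).
Proof. by move=> S; rewrite eqxx. Qed.

Lemma kchainD D p c1 c2 : kchain D p c1 -> kchain D p c2 ->
  kchain D p (fun S => c1 S + c2 S).
Proof.
by move=> c1D c2D S; have [->|/c1D //] := eqVneq (c1 S) 0; rewrite add0r; apply: c2D.
Qed.

Lemma kchainN D p c : kchain D p c -> kchain D p (fun S => - c S).
Proof. by move=> cD S; rewrite oppr_eq0; apply: cD. Qed.

Lemma kchainZ D p a c : kchain D p c -> kchain D p (fun S => a *: c S).
Proof. by move=> cD S; have [->|/cD //] := eqVneq (c S) 0; rewrite scaler0 eqxx. Qed.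

Lemma kchain_set0 p c : kchain set0 p.+1 c -> forall S, c S = 0.
Proof.
move=> c0 S; apply/eqP; apply: contraT => /c0 [].
by rewrite subset0 => /eqP ->; rewrite cards0.
Qed.

Lemma kchain_notin_eq0 D p k c : kchain D p c -> k \notin D ->
  forall S, k \in S -> c S = 0.
Proof.
move=> cD kD S kS; apply/eqP; apply: contraT => /cD [SD _].
by rewrite (subsetP SD k kS) in kD.
Qed.

Lemma contr_notin_eq0 D p k c : kchain D p c -> k \notin D ->
  forall T, contr k c T = 0.
Proof.
move=> cD kD T; rewrite /contr (kchain_notin_eq0 cD kD) ?setU11 //.
by rewrite scaler0 if_same.
Qed.

Lemma kchain_setD1 D p k c : kchain D p c -> (forall T, contr k c T = 0) ->
  kchain (D :\ k) p c.
Proof.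
move=> cD ck0 S cS; have [SD ->] := cD S cS; split => //.
case kS: (k \in S).
  have := ck0 (S :\ k); rewrite /contr setD11 setD1K //.
  move=> /(congr1 (fun v => ksign (S :\ k) k *: v)); rewrite ksign_scaleK scaler0.
  by move=> c0; rewrite c0 eqxx in cS.
by rewrite subsetD1 SD kS.
Qed.

Lemma kchain_kdiff D p c : kchain D p.+1 c -> kchain D p (kdiff y c).
Proof.
move=> cD T.
have [/andP[-> /eqP ->] //|notDT] := boolP ((T \subset D) && (#|T| == p)).
move=> /negP[]; apply/eqP; rewrite /kdiff big1 // => j; rewrite inE => jT.
have [->|/cD [jTD]] := eqVneq (c (j |: T)) 0; first by rewrite scaler0.
rewrite cardsU1 jT add1n => -[Tp]; case/negP: notDT.
by rewrite Tp eqxx andbT (subset_trans (subsetUr _ _) jTD).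
Qed.

Lemma kchain_contr D p k c : kchain D p.+1 c -> kchain (D :\ k) p (contr k c).
Proof.
move=> cD T; rewrite /contr; case kT: (k \in T); first by rewrite eqxx.
have [->|/cD [kTD]] := eqVneq (c (k |: T)) 0; first by rewrite scaler0 eqxx.
rewrite cardsU1 kT add1n => -[Tp] _; split => //.
by rewrite subsetD1 kT (subset_trans (subsetUr _ _) kTD).
Qed.

Lemma kchain_wedge D p k c : kchain D p c -> kchain (k |: D) p.+1 (wedge k c).
Proof.
move=> cD S; rewrite /wedge; case kS: (k \in S); last by rewrite eqxx.
have [->|/cD [SkD Skp]] := eqVneq (c (S :\ k)) 0; first by rewrite scaler0 eqxx.
move=> _; rewrite (cardsD1 k S) kS Skp; split => //.
by rewrite -(setD1K kS) setUS.
Qed.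

Definition homologous_on (A D : {set 'I_r}) p (u : {set 'I_r} -> M) :=
  exists w V, [/\ kchain D p w, forall T, kdiff y w T = 0, kchain A p.+1 V
                & forall T, u T = w T + kdiff y V T].

End KoszulCalculus.

Section AnnihilatorDescent.

Variables (R : comPzRingType) (M : lmodType R) (r : nat) (y : 'I_r -> R).
Variables (I : {pred R}) (i : nat).
Hypothesis yI : forall j, y j \in I.
Hypothesis annHi : forall A : {set 'I_r}, ann_koszul_homology M y I A i.
Implicit Types (c U X z : {set 'I_r} -> M) (A D E S T : {set 'I_r}).

Lemma ann_cycle_boundary a A z : a \in I -> kchain A i z ->
  (forall T, kdiff y z T = 0) ->
  exists2 b, kchain A i.+1 b & forall T, kdiff y b T = a *: z T.
Proof.
move=> aI zA dz; have [|b [bA db]] := annHi aI (conj zA _).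
  by apply: functional_extensionality.
by exists b => // T; rewrite db.
Qed.

Lemma boundary_setD1 D E l X U : kchain D i X -> l \notin D -> l \in E ->
  kchain E i.+1 U -> (forall T, kdiff y U T = X T) ->
  exists2 U', kchain (E :\ l) i.+1 U' & forall T, kdiff y U' T = X T.
Proof.
move=> XD lD lE UE dU.
have U1E := kchain_contr (k:=l) UE.
have dU1 T : kdiff y (contr l U) T = 0.
  by rewrite kdiff_contr (eq_contr _ _ dU) (contr_notin_eq0 XD lD) oppr0.
have [b bE db] := ann_cycle_boundary (yI l) U1E dU1.
exists (fun S => U S - wedge l (contr l U) S + b S).
  apply: kchainD bE; apply: kchain_setD1.
    by apply: kchainD UE _; rewrite -(setD1K lE); apply/kchainN/kchain_wedge.
  move=> T; rewrite contrD contrN contr_wedge_id ?subrr //.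
  by apply: kchain_notin_eq0 U1E _; rewrite setD11.
move=> T; rewrite !kdiffD kdiffN dU db.
have := kdiff_wedge y l (contr l U) T.
by rewrite (eq_wedge _ _ dU1) wedge0 addr0 => ->; rewrite subrK.
Qed.

Lemma boundary_restrict D E X U : kchain D i X -> kchain E i.+1 U ->
  (forall T, kdiff y U T = X T) ->
  exists2 X', kchain D i.+1 X' & forall T, kdiff y X' T = X T.
Proof.
move=> XD; have [n] := ubnP #|E :\: D|; elim: n E U => // n IH E U ltEn UE dU.
have [EDe|[l]] := set_0Vmem (E :\: D).
  by exists U => //; apply: kchainS UE; rewrite -setD_eq0 EDe.
rewrite inE => /andP[lD lE].
have [U' U'E dU'] := boundary_setD1 XD lD lE UE dU.
apply: IH U'E dU'; move: ltEn; rewrite (cardsD1 l) inE lD lE add1n ltnS.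
by apply: leq_trans; rewrite setDDl setUC -setDDl.
Qed.

Lemma homologous_on_setD1 a A D k z : a \in I -> kchain A i.+1 z ->
  (forall T, kdiff y z T = 0) -> D \subset A -> k \in D ->
  homologous_on y A D i.+1 (fun S => a *: z S) ->
  homologous_on y A (D :\ k) i.+1 (fun S => a *: z S).
Proof.
move=> aI zA dz DA kD [w [V [wD dw VA azE]]].
have [b bA db] :=
  ann_cycle_boundary aI (kchain_contr (k:=k) zA) (kcycle_contr k dz).
have dbV T : kdiff y (fun S => b S + contr k V S) T = contr k w T.
  rewrite kdiffD db -contrZ (eq_contr _ _ azE) contrD kdiff_contr.
  by rewrite addrK.
have [X XD dX] := boundary_restrict (kchain_contr (k:=k) wD)
  (kchainD bA (kchain_contr (k:=k) VA)) dbV.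
have wXD : kchain D i.+2 (wedge k X) by rewrite -(setD1K kD); apply: kchain_wedge.
exists (fun S => w S + kdiff y (wedge k X) S), (fun S => V S - wedge k X S).
split.
- apply: kchain_setD1 (kchainD wD (kchain_kdiff wXD)) _ => T.
  rewrite contrD -[contr k (kdiff _ _) T]opprK -kdiff_contr.
  have X0 : forall S, k \in S -> X S = 0.
    by apply: kchain_notin_eq0 XD _; rewrite setD11.
  by rewrite (eq_kdiff _ _ (contr_wedge_id X0)) dX subrr.
- by move=> T; rewrite kdiffD dw kdiffK addr0.
- exact/kchainD/kchainN/(kchainS DA).
- by move=> T; rewrite kdiffD kdiffN azE addrACA subrr addr0.
Qed.

Lemma homologous_on_set0 a A D z : a \in I -> kchain A i.+1 z ->
  (forall T, kdiff y z T = 0) -> D \subset A ->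
  homologous_on y A D i.+1 (fun S => a *: z S) ->
  homologous_on y A set0 i.+1 (fun S => a *: z S).
Proof.
move=> aI zA dz; have [n] := ubnP #|D|; elim: n D => // n IH D ltDn DA hD.
have [D0|[k kD]] := set_0Vmem D; first by rewrite -D0.
apply: (IH (D :\ k)); last exact: homologous_on_setD1 hD.
- by move: ltDn; rewrite (cardsD1 k) kD add1n ltnS.
- exact: subset_trans (subD1set D k) DA.
Qed.

Lemma ann_koszul_homology_succ A : ann_koszul_homology M y I A i.+1.
Proof.
move=> a z aI [zA dz0]; have dz T : kdiff y z T = 0 by rewrite dz0.
have hA : homologous_on y A A i.+1 (fun S => a *: z S).
  exists (fun S => a *: z S), (fun=> 0); split.
  - exact: kchainZ.
  - by move=> T; rewrite kdiffZ dz scaler0.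
  - exact: kchain0.
  - by move=> T; rewrite kdiff0 addr0.
have [w [V [w0 _ VA azE]]] := homologous_on_set0 aI zA dz (subxx A) hA.
exists V; split => //; apply: functional_extensionality => S.
by rewrite azE (kchain_set0 w0) add0r.
Qed.

End AnnihilatorDescent.

Theorem corollary2p2 (R : comPzRingType) (M : lmodType R) (r : nat)
  (y : 'I_r -> R) (i : nat) (I : {pred R}) :
  (0 < i)%N -> is_ideal I -> (forall j, y j \in I) ->
  (forall A : {set 'I_r}, ann_koszul_homology M y I A i) ->
  forall A : {set 'I_r}, ann_koszul_homology M y I A i.+1.
Proof. by move=> _ _ yI annHi A; apply: ann_koszul_homology_succ. Qed.
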